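(* Let $C_2\subseteq C_1\subseteq\mathbb{F}_2^n$ be linear codes with bases $\beta_2\subseteq\beta_1$, respectively, and $Q=Q(C_1,C_2)$ the corresponding CSS code. If $N=2^\ell$ ($\ell$ a positive integer), then $$H_N=\left(\beta_2\star\bigcup_{i=0}^{\ell-1}\left(2^i\beta_1^{(i)}\right)\right)^{\perp_N}.$$
   Context: Elements of $\mathbb{F}_2^n$ are identified with vectors in $\{0,1\}^n\subseteq\mathbb{Z}_N^n$. $\omega=e^{2\pi\mathbf{i}/N}$, $U(a)=\mathrm{diag}(1,\omega^a)$ for $a\in\mathbb{Z}_N$ and $U(b)=\bigotimes_{i=1}^nU(b_i)$ for $b\in\mathbb{Z}_N^n$. $Q(C_1,C_2)$ is the subspace of $(\mathbb{C}^2)^{\otimes n}$ stabilized by all $X(u)Z(v)$, $u\in C_2$, $v\in C_1^\perp$, where $X(u)=\bigotimes X^{u_i}$, $Z(v)=\bigotimes Z^{v_i}$ with $X,Z$ the Pauli matrices. $H_N=\{b\in\mathbb{Z}_N^n: U(b)Q=Q\}$. For $u,v\in\mathbb{Z}_N^n$, $u\star v$ is the componentwise product. For a set $A$ of vectors and $r\ge1$, $A^{(r)}=\{v_1\star\cdots\star v_r: v_i\in A,\ v_i\neq v_j \text{ for } i\neq j\}$ and $A^{(0)}=\{(1,\ldots,1)\}$; $2^iA=\{2^ia:a\in A\}$; for sets $A,B$, $A\star B=\{a\star b: a\in A, b\in B\}$; and $A^{\perp_N}=\{w\in\mathbb{Z}_N^n: v\cdot w=0 \bmod N\ \forall v\in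 A\}$. *)

From HB Require Import structures.
From mathcomp Require Import all_boot all_order all_algebra.
From mathcomp Require Import complex.
From mathcomp Require Import reals trigo.
Set Implicit Arguments. Unset Strict Implicit. Unset Printing Implicit Defensive.
Import Order.TTheory GRing.Theory Num.Theory.
Local Open Scope ring_scope.
Local Open Scope complex_scope.

(* Vectors of F_2^n are row vectors 'rV['F_2]_n; they also index the
   computational basis of (C^2)^{\otimes n}. States are functions on this basis. *)
Definition state (R : realType) (n : nat) := {ffun 'rV['F_2]_n -> R[i]}.

Definition omega (R : realType) (N : nat) : R[i] :=
  (cos (2 * pi / N%:R))%:C + 'i * (sin (2 * pi / N%:R))%:C.

(* X(u) = tensor of X^{u_i}:  (X(u) psi)(x) = psi(x + u) *)
Definition Xop (R : realType) n (u : 'rV['F_2]_n) (psi : state R n) : state R n :=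
  [ffun x : 'rV['F_2]_n => psi (x + u)].

(* Z(v) = tensor of Z^{v_i}: diagonal with entry prod_i (-1)^{v_i x_i} *)
Definition Zop (R : realType) n (v : 'rV['F_2]_n) (psi : state R n) : state R n :=
  [ffun x : 'rV['F_2]_n => (\prod_(i < n) (if (v 0 i != 0) && (x 0 i != 0) then -1 else 1)) * psi x].

(* U(b) = tensor of diag(1, omega^{b_i}) *)
Definition Uop (R : realType) n (N : nat) (b : 'rV['Z_N]_n) (psi : state R n) : state R n :=
  [ffun x : 'rV['F_2]_n => (\prod_(i < n) (if x 0 i != 0 then omega R N ^+ (val (b 0 i)) else 1)) * psi x].

Definition dual2 n (C : {vspace 'rV['F_2]_n}) (v : 'rV['F_2]_n) : Prop :=
  forall c, c \in C -> \sum_(i < n) v 0 i * c 0 i = 0.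

Definition CSS (R : realType) n (C1 C2 : {vspace 'rV['F_2]_n}) (psi : state R n) : Prop :=
  forall u v, u \in C2 -> dual2 C1 v -> Xop u (Zop v psi) = psi.

(* H_N = { b in Z_N^n | U(b) Q = Q } *)
Definition HN (R : realType) n (N : nat) (C1 C2 : {vspace 'rV['F_2]_n}) (b : 'rV['Z_N]_n) : Prop :=
  forall phi : state R n, CSS C1 C2 phi <-> exists2 psi, CSS C1 C2 psi & phi = Uop b psi.

(* identification F_2^n  ~  {0,1}^n  inside  Z_N^n *)
Definition liftN n (N : nat) (v : 'rV['F_2]_n) : 'rV['Z_N]_n :=
  \row_i ((val (v 0 i))%:R : 'Z_N).

Definition star n (N : nat) (u v : 'rV['Z_N]_n) : 'rV['Z_N]_n := \row_i (u 0 i * v 0 i).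

Definition onesN n (N : nat) : 'rV['Z_N]_n := \row_i 1.

(* A^{(r)} for a set A of F_2-vectors (lifted to Z_N^n): products of r pairwise distinct
   elements of A;  A^{(0)} = {(1,...,1)}. *)
Definition starpow n (N : nat) (A : seq 'rV['F_2]_n) (r : nat) (w : 'rV['Z_N]_n) : Prop :=
  exists s : seq 'rV['F_2]_n,
    [/\ size s = r, uniq s, {subset s <= A} & w = foldr (@star n N) (onesN n N) (map (@liftN n N) s)].

Definition genset n (l : nat) (b1 b2 : seq 'rV['F_2]_n) (w : 'rV['Z_(2 ^ l)]_n) : Prop :=
  exists a i p, [/\ a \in b2, (i < l)%N, starpow b1 i p & w = star (liftN (2 ^ l) a) (p *+ (2 ^ i))].

Definition perpN n (N : nat) (A : 'rV['Z_N]_n -> Prop) (w : 'rV['Z_N]_n) : Prop :=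
  forall v, A v -> \sum_(i < n) v 0 i * w 0 i = 0.
Arguments genset {n} l b1 b2 w.

(* U(b) acts on the basis state |x> as multiplication by omega ^ F x, where
   F x = lift x . b in Z_N.  The states of Q are exactly the functions supported on
   C1 and invariant under translation by C2, so U(b) Q = Q iff F is invariant under
   C2-translations on C1, i.e. (as omega is a primitive N-th root of unity and C2 is
   spanned by beta2) iff F (x + a) = F x for x in C1 and a in beta2.  Since
   lift (x + a) = lift x + lift a - 2 lift x * lift a, this says F a = 0 and
   2 (lift x . (a * b)) = 0 on C1; expanding x along beta1 in the same way, one
   basis vector at a time, yields 2 ^ i ((g_1 * ... * g_i * a) . b) = 0 for distinct
   g_j in beta1, and the conditions with i >= l are empty because 2 ^ l = 0 in Z_N. *)

From HB Require Import structures.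
From mathcomp Require Import all_boot all_order all_algebra.
From mathcomp Require Import complex.
From mathcomp Require Import reals trigo.
From mathcomp Require Import ring lra.
Import Order.TTheory GRing.Theory Num.Theory.
Local Open Scope ring_scope.
Set Implicit Arguments. Unset Strict Implicit. Unset Printing Implicit Defensive.

Definition dot (R : pzRingType) n (u v : 'rV[R]_n) : R := \sum_(i < n) u 0 i * v 0 i.

Section DotProduct.
Variables (R : pzRingType) (n : nat).
Implicit Types (u v w : 'rV[R]_n).

Lemma dotDl u v w : dot (u + v) w = dot u w + dot v w.
Proof. by rewrite /dot -big_split; apply: eq_bigr => i _; rewrite mxE mulrDl. Qed.

Lemma dotNl u w : dot (- u) w = - dot u w.
Proof. by rewrite /dot -sumrN; apply: eq_bigr => i _; rewrite mxE mulNr. Qed.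

Lemma dotMnl u k w : dot (u *+ k) w = dot u w *+ k.
Proof. by rewrite /dot -sumrMnl; apply: eq_bigr => i _; rewrite mulmxnE mulrnAl. Qed.

Lemma dot0l w : dot 0 w = 0.
Proof. by rewrite -(mul0rn _ 0) dotMnl. Qed.

End DotProduct.

Lemma F2_cases (x : 'F_2) : x = 0 \/ x = 1.
Proof. by case: x => [[|[|k]] //] ?; [left | right]; apply: val_inj. Qed.

Lemma span_F2_ind n (s : seq 'rV['F_2]_n) (P : 'rV['F_2]_n -> Prop) :
  P 0 -> (forall g y, g \in s -> y \in <<s>>%VS -> P y -> P (g + y)) ->
  forall x, x \in <<s>>%VS -> P x.
Proof.
move=> P0 PD x /(@coord_span _ _ _ (in_tuple s)) ->.
set y := \sum_(i < _) _; suff : y \in <<s>>%VS /\ P y by case.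
rewrite {}/y; elim/big_rec: _ => [|i y _ [y_span Py]]; first by rewrite mem0v.
have [-> | ->] := F2_cases (coord (in_tuple s) i x); first by rewrite scale0r add0r.
have s_i : (in_tuple s)`_i \in s by apply: mem_nth.
by rewrite scale1r; split; [apply: memvD (memv_span s_i) y_span | apply: PD].
Qed.

Lemma dual_separates (F : fieldType) n (C : {vspace 'rV[F]_n}) x :
  x \notin C -> exists v, (forall c, c \in C -> dot v c = 0) /\ dot v x = 1.
Proof.
move=> xNC; pose X := [tuple of x :: vbasis C].
have freeX : free X.
  by rewrite free_cons (span_basis (vbasisP C)) xNC (basis_free (vbasisP C)).
pose v := \row_i coord X ord0 (delta_mx 0 i).
have dotE y : dot v y = coord X ord0 y.
  rewrite [in RHS](row_sum_delta y) linear_sum; apply: eq_bigr => i _.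
  by rewrite linearZ mxE mulrC.
exists v; split=> [c cC|]; last by rewrite dotE (coord_free ord0 ord0 freeX).
rewrite dotE (coord_vbasis cC) linear_sum big1 // => j _.
by rewrite linearZ /= -[(vbasis C)`_j]/(X`_(lift ord0 j)) coord_free // mulr0.
Qed.

Lemma span_shift_invariant n T (f : 'rV['F_2]_n -> T) (D : {vspace 'rV['F_2]_n}) s :
  {subset s <= D} ->
  (forall x c, x \in D -> c \in <<s>>%VS -> f (x + c) = f x) <->
  {in s, forall a x, x \in D -> f (x + a) = f x}.
Proof.
move=> sD; split=> [inv a a_s x xD | inv x c xD c_span]; first by rewrite inv ?memv_span.
pose P c := forall x, x \in D -> f (x + c) = f x.
move: c c_span x xD; apply: (span_F2_ind (P := P)) => [x _ | g c g_s _ IHc x xD].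
  by rewrite addr0.
by rewrite addrA IHc ?(inv g g_s) // (memvD xD (sD g g_s)).
Qed.

Section Omega.
Variables (R : realType) (N : nat).
Hypothesis N_gt0 : (0 < N)%N.

Lemma omegaX m : omega R N ^+ m =
  Complex (cos (m%:R * (2 * pi / N%:R))) (sin (m%:R * (2 * pi / N%:R))).
Proof.
set t := 2 * pi / N%:R.
have omegaE : omega R N = Complex (cos t) (sin t).
  by apply/eqP; rewrite eq_complex /= !(mul0r, mul1r, subr0, addr0, add0r, eqxx).
elim: m => [|m IHm]; first by rewrite expr0 mul0r cos0 sin0.
rewrite exprS IHm omegaE; apply/eqP; rewrite eq_complex /=.
rewrite -addn1 natrD mulrDl mul1r addrC cosD sinD.
by apply/andP; split; apply/eqP; ring.
Qed.

Lemma omega_order : omega R N ^+ N = 1.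
Proof.
by rewrite omegaX mulrCA mulfV ?pnatr_eq0 -?lt0n // mulr1 mulr_natl cos2pi sin2pi.
Qed.

(* With 0 < x := m pi / N < pi, cos (2 x) = 1 - 2 sin x ^ 2 < 1. *)
Lemma omegaX_neq1 m : (0 < m < N)%N -> omega R N ^+ m != 1.
Proof.
case/andP=> m_gt0 lt_mN; rewrite omegaX; apply/negP=> /eqP[cos_eq1 _].
set x := pi * (m%:R / N%:R) : R.
have x_gt0 : 0 < x by rewrite mulr_gt0 ?pi_gt0 ?divr_gt0 ?ltr0n.
have x_ltpi : x < pi.
  by rewrite -[ltRHS]mulr1 ltr_pM2l ?pi_gt0 // ltr_pdivrMr ?mul1r ?ltr_nat ?ltr0n.
have sinx_gt0 : 0 < sin x by apply: sin_gt0_pi; rewrite x_gt0.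
have : cos (x *+ 2) = 1.
  by rewrite -cos_eq1 /x mulr2n; congr cos; field; rewrite pnatr_eq0 -lt0n.
rewrite cos_mulr2n cos2sin2 => cos2x.
have : sin x ^+ 2 = 0 by move: cos2x; rewrite mulr2n; lra.
by move/eqP; rewrite expf_eq0 /= gt_eqF.
Qed.

Lemma omega_prim : N.-primitive_root (omega R N).
Proof.
have [m prim_m dvd_mN] := prim_order_exists N_gt0 omega_order.
suff eq_mN : m = N by move: prim_m; rewrite eq_mN.
apply/eqP; rewrite eqn_leq (dvdn_leq N_gt0 dvd_mN) leqNgt; apply/negP => lt_mN.
have := omegaX_neq1 (m := m); rewrite (prim_order_gt0 prim_m) lt_mN.
by rewrite (prim_expr_order prim_m) eqxx => /(_ isT).
Qed.

End Omega.

Section PrimRootZp.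
Variables (K : idomainType) (N : nat) (z : K).
Hypotheses (N_gt1 : (1 < N)%N) (z_prim : N.-primitive_root z).

Lemma valZp_lt (a : 'Z_N) : (val a < N)%N.
Proof. by case: a => a /=; rewrite Zp_cast. Qed.

Lemma valZpD (a b : 'Z_N) : val (a + b) = ((val a + val b) %% N)%N.
Proof. by congr (_ %% _)%N; apply: Zp_cast. Qed.

Lemma prim_exprZpD (a b : 'Z_N) : z ^+ val (a + b) = z ^+ val a * z ^+ val b.
Proof. by rewrite valZpD (prim_expr_mod z_prim) exprD. Qed.

Lemma prim_exprZp_inj : injective (fun a : 'Z_N => z ^+ val a).
Proof.
move=> a b /eqP; rewrite (eq_prim_root_expr z_prim) !modn_small ?valZp_lt //.
by move/eqP/val_inj.
Qed.

Lemma prim_exprZp_neq0 (a : 'Z_N) : z ^+ val a != 0.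
Proof.
rewrite expf_neq0 //; apply: contra_eqN (prim_expr_order z_prim) => /eqP ->.
by rewrite expr0n gtn_eqF ?(ltnW N_gt1) // eq_sym oner_eq0.
Qed.

Lemma prod_prim_exprZp n (x : 'rV['F_2]_n) (b : 'rV['Z_N]_n) :
  \prod_(i < n) (if x 0 i != 0 then z ^+ val (b 0 i) else 1) =
  z ^+ val (dot (liftN N x) b).
Proof.
have expr_val0 : z ^+ val (0 : 'Z_N) = 1 by apply: expr0.
rewrite /dot (big_morph (fun a : 'Z_N => z ^+ val a) prim_exprZpD expr_val0).
apply: eq_bigr => i _; rewrite mxE.
by have [-> | ->] := F2_cases (x 0 i); rewrite ?mul0r ?mul1r.
Qed.

End PrimRootZp.

Section DotStar.
Variables (n N : nat).
Implicit Types (u v w : 'rV['Z_N]_n) (x y : 'rV['F_2]_n).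

Lemma dot_starl u v w : dot (star u v) w = dot v (star u w).
Proof. by apply: eq_bigr => i _; rewrite !mxE mulrCA mulrA. Qed.

Lemma star_onesr u : star u (onesN n N) = u.
Proof. by apply/rowP => i; rewrite !mxE mulr1. Qed.

Lemma starA u v w : star u (star v w) = star (star u v) w.
Proof. by apply/rowP => i; rewrite !mxE mulrA. Qed.

Lemma starC u v : star u v = star v u.
Proof. by apply/rowP => i; rewrite !mxE mulrC. Qed.

Lemma liftN0 : liftN N (0 : 'rV['F_2]_n) = 0.
Proof. by apply/rowP => i; rewrite !mxE. Qed.

Lemma star_liftNxx x : star (liftN N x) (liftN N x) = liftN N x.
Proof.
by apply/rowP => i; rewrite !mxE; have [-> | ->] := F2_cases (x 0 i); rewrite ?mul0r ?mulr1.
Qed.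

Lemma liftND x y :
  liftN N (x + y) = liftN N x + liftN N y - star (liftN N x) (liftN N y) *+ 2.
Proof.
have [v0 v1 v11] : [/\ val (0 : 'F_2) = 0%N, val (1 : 'F_2) = 1%N & val (1 + 1 : 'F_2) = 0%N].
  by [].
apply/rowP => i; rewrite !mxE.
by have [-> | ->] := F2_cases (x 0 i); have [-> | ->] := F2_cases (y 0 i);
  rewrite ?v11 ?addr0 ?add0r ?v0 ?v1; ring.
Qed.

Lemma dot_liftND x y w : dot (liftN N (x + y)) w =
  dot (liftN N x) w + dot (liftN N y) w - dot (liftN N y) (star (liftN N x) w) *+ 2.
Proof. by rewrite liftND dotDl dotNl dotMnl dotDl dot_starl. Qed.

Lemma dot_starMn u p k w : dot (star u (p *+ k)) w = dot p (star u w) *+ k.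
Proof. by rewrite dot_starl dotMnl. Qed.

Lemma dot1_star u w : dot (onesN n N) (star u w) = dot u w.
Proof. by rewrite -dot_starl star_onesr. Qed.

End DotStar.

Lemma exp2_gt1 l : (0 < l)%N -> (1 < 2 ^ l)%N.
Proof. by move=> l_gt0; rewrite -[1%N]/(2 ^ 0)%N ltn_exp2l. Qed.

Section StarProducts.
Variables (n l : nat) (beta : seq 'rV['F_2]_n).
Hypothesis l_gt0 : (0 < l)%N.
Local Notation N := (2 ^ l)%N.
Implicit Types (w : 'rV['Z_N]_n) (s : seq 'rV['F_2]_n).

Definition star_prod s : 'rV['Z_N]_n := foldr (@star n N) (onesN n N) (map (@liftN n N) s).

Definition span_ann m w :=
  forall x, x \in <<beta>>%VS -> dot (liftN N x) w *+ 2 ^ m = 0.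

(* The lists s may repeat vectors of beta, which costs only powers of 2:
   see star_prod_undup and perp_genset. *)
Definition prod_ann m w :=
  forall s, {subset s <= beta} -> dot (star_prod s) w *+ 2 ^ (m + size s) = 0.

Lemma mulrn_exp2_eq0 (a : 'Z_N) m : (l <= m)%N -> a *+ 2 ^ m = 0.
Proof.
move=> le_lm; rewrite -(subnKC le_lm) expnD mulrnA -[a *+ N]mulr_natr.
by rewrite pchar_Zp ?exp2_gt1 // mulr0 mul0rn.
Qed.

Lemma prod_annE m w : prod_ann m w <->
  dot (onesN n N) w *+ 2 ^ m = 0 /\ {in beta, forall g, prod_ann m.+1 (star (liftN N g) w)}.
Proof.
split=> [ann | [ann1 ann] [|g s] sub_s /=]; last 2 first.
- by rewrite addn0.
- rewrite dot_starl -addSnnS; apply: ann; first by apply: sub_s; rewrite mem_head.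
  by move=> x x_s; apply: sub_s; rewrite inE x_s orbT.
split=> [|g g_beta s sub_s]; first by rewrite -[m]addn0; apply: (ann [::]).
rewrite -dot_starl addSnnS; apply: (ann (g :: s)) => x.
by rewrite inE => /predU1P[-> // | /sub_s].
Qed.

Lemma span_annE m w : span_ann m w <->
  {in beta, forall g, dot (liftN N g) w *+ 2 ^ m = 0} /\
  {in beta, forall g, span_ann m.+1 (star (liftN N g) w)}.
Proof.
have span_g g : g \in beta -> g \in <<beta>>%VS by move=> g_beta; rewrite memv_span.
split=> [ann | [ann1 ann]].
  split=> [g /span_g /ann // | g g_beta x x_span].
  have := ann _ (memvD (span_g _ g_beta) x_span).
  rewrite dot_liftND mulrnBl mulrnDl ann ?span_g // ann // add0r -mulrnA -expnS.
  by move/eqP; rewrite sub0r oppr_eq0 => /eqP.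
apply: span_F2_ind => [|g x g_beta x_span ann_x]; first by rewrite liftN0 dot0l mul0rn.
rewrite dot_liftND mulrnBl mulrnDl ann1 // ann_x addr0 -mulrnA -expnS.
by rewrite (ann g g_beta x x_span) subr0.
Qed.

(* Induction on l - m: once l <= m, both sides hold as 2 ^ m = 0 in Z_N. *)
Lemma span_ann_prod m w :
  span_ann m w <-> {in beta, forall g, prod_ann m (star (liftN N g) w)}.
Proof.
move: {2}(l - m)%N (leqnn (l - m)) => k; rewrite leq_subLR.
elim: k m w => [|k IHk] m w le_l_km.
  split=> _ => [g _ s _ | x _]; apply: mulrn_exp2_eq0; rewrite ?addn0 // in le_l_km.
  exact: leq_trans le_l_km (leq_addr _ _).
have IH w' : span_ann m.+1 w' <-> {in beta, forall g, prod_ann m.+1 (star (liftN N g) w')}.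
  by apply: IHk; rewrite addSnnS.
have starCA g g' :
    star (liftN N g) (star (liftN N g') w) = star (liftN N g') (star (liftN N g) w).
  by rewrite !starA (starC (liftN N g)).
rewrite span_annE; split=> [[ann1 ann] g g_beta | ann].
  apply/prod_annE; split=> [|g' g'_beta]; first by rewrite dot1_star ann1.
  by rewrite starCA; apply: (proj1 (IH _) (ann g' g'_beta)).
split=> g g_beta; first by have /prod_annE[] := ann g g_beta; rewrite dot1_star.
apply/IH => g' g'_beta; have /prod_annE[_ ann'] := ann g' g'_beta.
by rewrite starCA; apply: ann'.
Qed.

(* By dot_liftND, invariance of F := dot (liftN N _) b under the shift by a amounts to
   F a = 0 together with span_ann 1 (a * b). *)
Lemma shift_invariant_prod_ann b a : a \in <<beta>>%VS ->
  (forall x, x \in <<beta>>%VS -> dot (liftN N (x + a)) b = dot (liftN N x) b) <->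
  prod_ann 0 (star (liftN N a) b).
Proof.
move=> a_span; rewrite prod_annE expn0 mulr1n dot1_star -span_ann_prod.
split=> [inv | [Fa0 ann] x x_span]; last first.
  by rewrite addrC dot_liftND Fa0 add0r -[_ *+ 2]/(_ *+ 2 ^ 1) ann // subr0.
have Fa0 : dot (liftN N a) b = 0 by have := inv 0 (mem0v _); rewrite add0r liftN0 dot0l.
split=> // x x_span; have := inv x x_span; rewrite addrC dot_liftND Fa0 add0r.
by move/eqP; rewrite -subr_eq0 addrAC subrr add0r oppr_eq0 => /eqP.
Qed.

Lemma star_prod_cons x s : star_prod (x :: s) = star (liftN N x) (star_prod s).
Proof. by []. Qed.

Lemma star_prod_mem s x : x \in s -> star (liftN N x) (star_prod s) = star_prod s.
Proof.
elim: s => [//|y s IHs]; rewrite inE star_prod_cons => /predU1P[-> | x_s].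
  by rewrite starA star_liftNxx.
by rewrite starA (starC (liftN N x)) -starA IHs.
Qed.

Lemma star_prod_undup s : star_prod (undup s) = star_prod s.
Proof.
elim: s => [//|x s IHs] /=; rewrite star_prod_cons -IHs.
by case: ifP => x_s //; rewrite star_prod_mem ?mem_undup.
Qed.

Variable beta2 : seq 'rV['F_2]_n.

Lemma perp_genset b :
  perpN (genset l beta beta2) b <-> {in beta2, forall a, prod_ann 0 (star (liftN N a) b)}.
Proof.
split=> [perp a a_beta2 s sub_s | ann v [a [i [p [a_beta2 lt_il [s [<- _ sub_s ->]] ->]]]]].
  have [le_ls | lt_sl] := leqP l (size s); first exact: mulrn_exp2_eq0.
  have perp_s : dot (star_prod (undup s)) (star (liftN N a) b) *+ 2 ^ size (undup s) = 0.
    rewrite -dot_starMn; apply: perp; exists a, (size (undup s)), (star_prod (undup s)).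
    split=> //; first exact: leq_ltn_trans (size_undup s) lt_sl.
    exists (undup s); split=> //; first exact: undup_uniq.
    by move=> y; rewrite mem_undup => /sub_s.
  by rewrite -star_prod_undup add0n -(subnKC (size_undup s)) expnD mulrnA perp_s mul0rn.
by rewrite /= -/(dot _ b) dot_starMn (ann a a_beta2 s sub_s).
Qed.

End StarProducts.

Section CSSCode.
Variables (R : realType) (n : nat) (C1 C2 : {vspace 'rV['F_2]_n}).
Hypothesis C21 : (C2 <= C1)%VS.
Implicit Types (v y : 'rV['F_2]_n) (psi : state R n).

Lemma Zop_sign v y :
  \prod_(i < n) (if (v 0 i != 0) && (y 0 i != 0) then -1 else 1 : R[i]) =
  if dot v y == 0 then 1 else -1.
Proof.
apply: (big_rec2 (fun p d => p = if d == 0 then 1 else -1)) => [|i p d _ ->].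
  by rewrite eqxx.
have [-> | ->] := F2_cases (v 0 i); first by rewrite eqxx mul0r add0r mul1r.
have [-> | ->] := F2_cases (y 0 i); first by rewrite eqxx mulr0 add0r mul1r.
by have [-> | ->] := F2_cases d; rewrite /= ?mulrNN ?mulr1.
Qed.

Lemma CSSP psi : CSS C1 C2 psi <->
  (forall x, x \notin C1 -> psi x = 0) /\ (forall x u, u \in C2 -> psi (x + u) = psi x).
Proof.
split=> [css | [supp inv] u v uC2 v_dual].
  split=> [x xNC1 | x u uC2].
    have [v [v_dual vx1]] := dual_separates xNC1.
    have /ffunP/(_ x) := css 0 v (mem0v _) v_dual.
    rewrite !ffunE addr0 Zop_sign vx1 oner_eq0 mulN1r => /eqP.
    by rewrite eqNr => /eqP.
  have /ffunP/(_ x) := css u 0 uC2 (fun c _ => dot0l c).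
  by rewrite !ffunE Zop_sign dot0l eqxx mul1r.
apply/ffunP => x; rewrite !ffunE inv // Zop_sign.
have [xC1 | xNC1] := boolP (x \in C1); last by rewrite supp // mulr0.
have -> : dot v (x + u) = 0 by apply: v_dual; rewrite memvD // (subvP C21).
by rewrite eqxx mul1r.
Qed.

Definition diag_op (g : 'rV['F_2]_n -> R[i]) (psi : state R n) : state R n :=
  [ffun x => g x * psi x].

Lemma CSS_diag_op g psi : (forall x c, x \in C1 -> c \in C2 -> g (x + c) = g x) ->
  CSS C1 C2 psi -> CSS C1 C2 (diag_op g psi).
Proof.
move=> g_inv /CSSP[supp inv]; apply/CSSP; split=> [x xNC1 | x u uC2]; rewrite !ffunE.
  by rewrite supp // mulr0.
have [xC1 | xNC1] := boolP (x \in C1); first by rewrite g_inv // inv.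
have xuNC1 : x + u \notin C1.
  by apply: contra xNC1 => xuC1; rewrite -(addrK u x) memvB // (subvP C21).
by rewrite !supp // !mulr0.
Qed.

Lemma CSS_diag_opP g : (forall x, g x != 0) ->
  (forall phi, CSS C1 C2 phi <-> exists2 psi, CSS C1 C2 psi & phi = diag_op g psi) <->
  (forall x c, x \in C1 -> c \in C2 -> g (x + c) = g x).
Proof.
move=> g_neq0; split=> [stab x c xC1 cC2 | g_inv phi].
  pose coset : state R n := [ffun y => (y - x \in C2)%:R].
  have css_coset : CSS C1 C2 coset.
    apply/CSSP; split=> [y yNC1 | y u uC2]; rewrite !ffunE; last by rewrite addrAC rpredDr.
    apply/eqP; rewrite pnatr_eq0 eqb0; apply: contra yNC1 => yxC2.
    by rewrite -(subrK x y) memvD // (subvP C21).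
  have /CSSP[_ inv] : CSS C1 C2 (diag_op g coset) by apply/stab; exists coset.
  by have := inv x c cC2; rewrite !ffunE addrAC !subrr add0r cC2 mem0v !mulr1.
split=> [css | [psi css ->]]; last exact: CSS_diag_op.
exists (diag_op (fun x => (g x)^-1) phi).
  by apply: CSS_diag_op => // x c xC1 cC2; rewrite g_inv.
by apply/ffunP => x; rewrite !ffunE mulrA mulfV ?mul1r.
Qed.

End CSSCode.

Theorem theorem3p2 (R : realType) (n l : nat)
  (C1 C2 : {vspace 'rV['F_2]_n}) (beta1 beta2 : seq 'rV['F_2]_n) :
  (0 < l)%N ->
  (C2 <= C1)%VS ->
  basis_of C1 beta1 -> basis_of C2 beta2 -> {subset beta2 <= beta1} ->
  forall b : 'rV['Z_(2 ^ l)]_n,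
    HN R C1 C2 b <-> perpN (genset l beta1 beta2) b.
Proof.
move=> l_gt0 C21 basis1 basis2 beta21 b.
have N_gt1 := exp2_gt1 l_gt0.
have prim := omega_prim R (ltnW N_gt1).
pose F (y : 'rV['F_2]_n) := dot (liftN (2 ^ l) y) b.
pose g (y : 'rV['F_2]_n) :=
  \prod_(i < n) (if y 0 i != 0 then omega R (2 ^ l) ^+ val (b 0 i) else 1).
have gE y : g y = omega R (2 ^ l) ^+ val (F y) := prod_prim_exprZp N_gt1 prim y b.
have HN_shift : HN R C1 C2 b <-> forall x c, x \in C1 -> c \in C2 -> F (x + c) = F x.
  apply: (iff_trans (CSS_diag_opP C21 (g := g) _)) => [y|].
    by rewrite gE prim_exprZp_neq0.
  split=> inv x c xC1 cC2; last by rewrite !gE inv.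
  by apply: (prim_exprZp_inj N_gt1 prim); rewrite -!gE inv.
rewrite HN_shift perp_genset // -(span_basis basis1) -(span_basis basis2).
rewrite span_shift_invariant; last by move=> a /beta21; apply: memv_span.
split=> inv a a_beta2; have a_span := memv_span (beta21 _ a_beta2).
  by apply/(shift_invariant_prod_ann l_gt0 b a_span)/inv.
by apply/(shift_invariant_prod_ann l_gt0 b a_span)/inv.
Qed.
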